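(* With $D$, $\star$, $D_1=D[X]$ and $[\star]$ as defined in the context, $\mathrm{QMax}^{[\star]}(D_1)=\{Q_1\in\mathrm{Spec}(D_1)\mid Q_1\cap D=(0)\text{ and }\mathrm{c}_D(Q_1)^{\star_f}=D^\star\}\cup\{P[X]\mid P\in\mathrm{QMax}^{\star_f}(D)\}$.
   Context: $D$ is an integral domain with quotient field $K$, $X,Y$ indeterminates, $\star$ a semistar operation on $D$, $D_1:=D[X]$, $K_1:=K(X)$. $\overline{\boldsymbol F}(A)$ is the set of nonzero $A$-submodules of the quotient field of $A$. A semistar operation on $A$ is a map $\star:\overline{\boldsymbol F}(A)\to\overline{\boldsymbol F}(A)$ with $(xE)^\star=xE^\star$ for nonzero $x$ in the quotient field, $E\subseteq F\Rightarrow E^\star\subseteq F^\star$, $E\subseteq E^\star$, $(E^\star)^\star=E^\star$. $E^{\star_f}=\bigcup\{F^\star\mid F\subseteq E,\ F$ nonzero finitely generated fractional ideal$\}$. A nonzero ideal $I$ of $A$ is a quasi-$\star$-ideal if $I^\star\cap A=I$; $\mathrm{QMax}^\star(A)$ is the set of maximal elements among proper quasi-$\star$-ideals. $\mathrm{c}_D(Q_1)$ is the ideal of $D$ generated by all coefficients of all polynomials in $Q_1$. $\boldsymbol\Delta_1^\star:=\{Q_1\in\mathrm{Spec}(D_1)\mid Q_1\cap D=(0),\ \text{or } Q_1=(Q_1\cap D)[X]\text{ and }(Q_1\cap D)^{\star_f}\subsetneq D^\star\}$; $\mathcal S_1^\star:=D_1[Y]\setminus\bigcup\{Q_1[Y]\mid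 Q_1\in\boldsymbol\Delta_1^\star\}$; $[\star]$ is the semistar operation on $D_1$ given by $E^{[\star]}:=E[Y]_{\mathcal S_1^\star}\cap K_1$, where $E[Y]_{\mathcal S_1^\star}$ is the $D_1[Y]_{\mathcal S_1^\star}$-submodule of $K(X,Y)$ generated by $E$. *)

From HB Require Import structures.
From mathcomp Require Import all_boot all_order all_algebra.
Set Implicit Arguments. Unset Strict Implicit. Unset Printing Implicit Defensive.
Import GRing.Theory.
Local Open Scope ring_scope.

Definition emb (A : idomainType) (a : A) : {fraction A} := @FracField.tofrac A a.

Definition is_ideal (R : comNzRingType) (I : R -> Prop) : Prop :=
  I 0 /\ (forall x y, I x -> I y -> I (x + y)) /\ (forall r x, I x -> I (r * x)).

Definition prime_ideal (R : comNzRingType) (I : R -> Prop) : Prop :=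
  is_ideal I /\ ~ I 1 /\ (forall x y, I (x * y) -> I x \/ I y).

Section Semistar.
Variable A : idomainType.
Local Notation K := {fraction A}.

Definition Fbar (E : K -> Prop) : Prop :=
  [/\ E 0, (forall x y, E x -> E y -> E (x + y)),
      (forall (a : A) x, E x -> E (emb a * x)) & exists x, x != 0 /\ E x].

Definition sub (E F : K -> Prop) : Prop := forall x, E x -> F x.
Definition seteq (E F : K -> Prop) : Prop := forall x, E x <-> F x.

Definition smul (x : K) (E : K -> Prop) : K -> Prop :=
  fun y => exists e, E e /\ y = x * e.

Definition ringset : K -> Prop := fun x => exists a : A, x = emb a.

Definition fimg (I : A -> Prop) : K -> Prop :=
  fun x => exists a : A, I a /\ x = emb a.

Definition semistar (star : (K -> Prop) -> (K -> Prop)) : Prop :=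
  [/\ (forall E, Fbar E -> Fbar (star E)),
      (forall (x : K) E, x != 0 -> Fbar E -> seteq (star (smul x E)) (smul x (star E))),
      (forall E F, Fbar E -> Fbar F -> sub E F -> sub (star E) (star F)),
      (forall E, Fbar E -> sub E (star E)) &
      (forall E, Fbar E -> seteq (star (star E)) (star E))].

Definition span (s : seq K) : K -> Prop :=
  fun z => exists c : 'I_(size s) -> A, z = \sum_(i < size s) emb (c i) * s`_i.

Definition star_f (star : (K -> Prop) -> (K -> Prop)) (E : K -> Prop) : K -> Prop :=
  fun z => exists s : seq K, has (fun x => x != 0) s /\ sub (span s) E /\ star (span s) z.

Definition quasi_ideal (star : (K -> Prop) -> (K -> Prop)) (I : A -> Prop) : Prop :=
  is_ideal I /\ (exists a, a != 0 /\ I a) /\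
  (forall a : A, star (fimg I) (emb a) <-> I a).

Definition QMax (star : (K -> Prop) -> (K -> Prop)) (I : A -> Prop) : Prop :=
  [/\ quasi_ideal star I, ~ I 1 &
      forall J : A -> Prop, quasi_ideal star J -> ~ J 1 ->
        (forall a, I a -> J a) -> forall a, J a <-> I a].
End Semistar.

Section Bracket.
Variable D : idomainType.
Local Notation K := {fraction D}.
Local Notation D1 := {poly D}.
Local Notation K1 := {fraction {poly D}}.
Local Notation L := {fraction {poly K1}}.

Definition contr (Q1 : D1 -> Prop) : D -> Prop := fun d => Q1 d%:P.

Definition extX (P : D -> Prop) : D1 -> Prop := fun p => forall k, P p`_k.

Definition extY (Q1 : D1 -> Prop) : {poly D1} -> Prop := fun f => forall k, Q1 f`_k.

Definition content_ideal (Q1 : D1 -> Prop) : D -> Prop :=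
  fun d => exists n (c : 'I_n -> D) (q : 'I_n -> D1) (k : 'I_n -> nat),
    (forall i, Q1 (q i)) /\ d = \sum_(i < n) c i * (q i)`_(k i).

Variable star : (K -> Prop) -> (K -> Prop).

Definition Delta1 (Q1 : D1 -> Prop) : Prop :=
  prime_ideal Q1 /\
  ((forall d : D, contr Q1 d <-> d = 0) \/
   ((forall p, Q1 p <-> extX (contr Q1) p) /\
    sub (star_f star (fimg (contr Q1))) (star (@ringset D)) /\
    exists x, star (@ringset D) x /\ ~ star_f star (fimg (contr Q1)) x)).

Definition S1 (f : {poly D1}) : Prop :=
  forall Q1, Delta1 Q1 -> ~ extY Q1 f.

Definition embY (f : {poly D1}) : L := @FracField.tofrac _ (map_poly (@emb {poly D}) f).
Definition embK1 (x : K1) : L := @FracField.tofrac _ (x%:P).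

(* E[Y]_{S1}: the D1[Y]_{S1}-submodule of K(X,Y) generated by E *)
Definition genS (E : K1 -> Prop) : L -> Prop :=
  fun z => exists n (f s : 'I_n -> {poly D1}) (e : 'I_n -> K1),
    (forall i, S1 (s i)) /\ (forall i, E (e i)) /\
    z = \sum_(i < n) (embY (f i) / embY (s i)) * embK1 (e i).

(* E^{[star]} := E[Y]_{S1} \cap K1 *)
Definition bracket (E : K1 -> Prop) : K1 -> Prop := fun x => genS E (embK1 x).
End Bracket.

From HB Require Import structures.
From mathcomp Require Import all_boot all_order all_algebra zify.
From mathcomp Require Import boolp classical_sets.
Set Implicit Arguments. Unset Strict Implicit. Unset Printing Implicit Defensive.
Import GRing.Theory.
Local Open Scope ring_scope.

(* Everything rests on a fraction-free description of [star]: for an ideal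
   J of D[X] and g in D[X], g lies in J^[star] iff s g lies in J[Y] for some
   s in S1 ([bracket_fimgE]).  Since P[X] is prime for P prime, S1 is
   multiplicative, and the quasi-[star]-ideals are exactly the nonzero
   ideals that are S1-saturated. *)

Notation nonzero_seq s := (has (fun x => x != 0) s).

Section Ideals.
Variable R : comNzRingType.
Implicit Types (I : R -> Prop) (a b x y : R).

Lemma ideal_sum I n (F : 'I_n -> R) :
  is_ideal I -> (forall i, I (F i)) -> I (\sum_(i < n) F i).
Proof. by case=> I0 [ID _] IF; elim/big_ind: _ => //. Qed.

Lemma ideal_mulr I x r : is_ideal I -> I x -> I (x * r).
Proof. by case=> _ [_ IM] Ix; rewrite mulrC; apply: IM. Qed.

Lemma ideal_opp I x : is_ideal I -> I x -> I (- x).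
Proof. by case=> _ [_ IM] Ix; rewrite -mulN1r; apply: IM. Qed.

Definition adjoin I a : R -> Prop := fun x => exists q u, I q /\ x = q + u * a.

Lemma adjoin_ideal I a : is_ideal I -> is_ideal (adjoin I a).
Proof.
case=> I0 [ID IM]; split; first by exists 0, 0; rewrite mul0r addr0.
split.
  move=> x y [p [u [Ip ->]]] [q [v [Iq ->]]]; exists (p + q), (u + v).
  by split; [apply: ID | rewrite mulrDl addrACA].
move=> r x [p [u [Ip ->]]]; exists (r * p), (r * u).
by split; [apply: IM | rewrite mulrDr mulrA].
Qed.

Lemma adjoin_l I a x : I x -> adjoin I a x.
Proof. by move=> Ix; exists x, 0; rewrite mul0r addr0. Qed.

Lemma adjoin_r I a : is_ideal I -> adjoin I a a.
Proof. by case=> I0 _; exists 0, 1; rewrite mul1r add0r. Qed.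

Lemma adjoin_mul I a b x y :
  is_ideal I -> I (a * b) -> adjoin I a x -> adjoin I b y -> I (x * y).
Proof.
move=> hI Iab [p [u [Ip ->]]] [q [v [Iq ->]]]; case: (hI) => _ [ID IM].
rewrite mulrDl; apply: (ID); first by rewrite mulrC; apply: (IM).
rewrite mulrDr; apply: (ID); first by apply: (IM).
by rewrite mulrACA; apply: (IM).
Qed.

Definition polyext I : {poly R} -> Prop := fun p => forall k, I p`_k.

Lemma polyext_ideal I : is_ideal I -> is_ideal (polyext I).
Proof.
move=> hI; case: (hI) => I0 [ID _]; split; first by move=> k; rewrite coef0.
split; first by move=> p q hp hq k; rewrite coefD; apply: ID.
move=> r p hp k; rewrite coefM; apply: ideal_sum => // i.
by rewrite mulrC; apply: ideal_mulr hI (hp _).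
Qed.

Lemma polyextC I c : is_ideal I -> polyext I c%:P <-> I c.
Proof.
move=> [I0 _]; split; first by move/(_ 0%N); rewrite coefC.
by move=> Ic k; rewrite coefC; case: eqP.
Qed.

Lemma polyext_mul (E F G : R -> Prop) p q : is_ideal G ->
  (forall x y, E x -> F y -> G (x * y)) -> polyext E p -> polyext F q ->
  polyext G (p * q).
Proof.
by move=> hG EFG hp hq k; rewrite coefM; apply: ideal_sum => // i; apply: EFG.
Qed.

Lemma first_coef_outside I p : ~ polyext I p ->
  exists i, ~ I p`_i /\ forall k, (k < i)%N -> I p`_k.
Proof.
move=> /existsNP [k nk].
have ex : exists k, ~~ `[< I p`_k >] by exists k; apply/asboolPn.
case: (ex_minnP ex) => i /asboolPn ni imin; exists i; split => // j lt_ji.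
by apply: contrapT => /asboolPn /imin; rewrite leqNgt lt_ji.
Qed.

(* The extension of a prime ideal to R[X] is prime: compare the lowest
   coefficients of f and g outside I with the coefficient of fg in between. *)
Lemma polyext_prime I : prime_ideal I -> prime_ideal (polyext I).
Proof.
move=> [hI [n1 Iprime]]; have [I0 [ID _]] := hI.
split; first exact: polyext_ideal.
split; first by move/(_ 0%N); rewrite coef1.
move=> f g fg; apply: contrapT => /not_orP [/first_coef_outside [i [fi hfi]]].
move=> /first_coef_outside [j [gj hgj]].
have lt_i : (i < (i + j).+1)%N by rewrite ltnS leq_addr.
have rest : I (\sum_(k < (i + j).+1 | k != Ordinal lt_i) f`_k * g`_(i + j - k)).
  elim/big_ind: _ => // k nk.
  have : (k != i :> nat) by apply: contraNneq nk => e; apply/eqP/val_inj.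
  rewrite neq_ltn => /orP [lt_ki | lt_ik]; first exact: ideal_mulr hI (hfi _ lt_ki).
  rewrite mulrC; apply: ideal_mulr hI (hgj _ _).
  by rewrite -(ltn_add2l k) subnKC ?ltn_add2r // -ltnS ltn_ord.
have := fg (i + j)%N; rewrite coefM (bigD1 (Ordinal lt_i)) //= addKn => fgij.
have /Iprime [] // : I (f`_i * g`_j).
by have := ID _ _ fgij (ideal_opp hI rest); rewrite addrK.
Qed.

End Ideals.

Section Submodules.
Variable A : idomainType.
Local Notation K := {fraction A}.
Implicit Types (E F M : K -> Prop) (s t : seq K) (I : A -> Prop).

Lemma emb0 : emb (0 : A) = 0. Proof. exact: rmorph0. Qed.
Lemma emb1 : emb (1 : A) = 1. Proof. exact: rmorph1. Qed.
Lemma embD (x y : A) : emb (x + y) = emb x + emb y. Proof. exact: rmorphD. Qed.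
Lemma embM (x y : A) : emb (x * y) = emb x * emb y. Proof. exact: rmorphM. Qed.
Lemma emb_eq0 (x : A) : (emb x == 0) = (x == 0). Proof. exact: tofrac_eq0. Qed.

Definition subm M :=
  [/\ M 0, (forall x y, M x -> M y -> M (x + y)) & (forall (a : A) x, M x -> M (emb a * x))].

Lemma Fbar_subm E : Fbar E -> subm E.
Proof. by case=> M0 MD MM _; split. Qed.

Lemma subm_sum M n (F : 'I_n -> K) : subm M -> (forall i, M (F i)) -> M (\sum_(i < n) F i).
Proof. by case=> M0 MD _ MF; elim/big_ind: _ => //. Qed.

Lemma span_mem s x : x \in s -> span s x.
Proof.
move=> xs; have lt_xs : (index x s < size s)%N by rewrite index_mem.
exists (fun i => if i == Ordinal lt_xs then 1 else 0).
rewrite (bigD1 (Ordinal lt_xs)) //= eqxx emb1 mul1r nth_index // big1 ?addr0 //.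
by move=> i /negbTE ->; rewrite emb0 mul0r.
Qed.

Lemma span_subm s : subm (span s).
Proof.
split.
- by exists (fun _ => 0); rewrite big1 // => i _; rewrite emb0 mul0r.
- move=> x y [c ->] [d ->]; exists (fun i => c i + d i).
  by rewrite -big_split; apply: eq_bigr => i _; rewrite embD mulrDl.
- move=> a x [c ->]; exists (fun i => a * c i).
  by rewrite mulr_sumr; apply: eq_bigr => i _; rewrite embM mulrA.
Qed.

Lemma span_sub s M : subm M -> (forall x, x \in s -> M x) -> sub (span s) M.
Proof.
move=> hM hs z [c ->]; apply: subm_sum => // i.
by case: hM => _ _ MM; apply: MM; apply: hs; apply: mem_nth.
Qed.

Lemma span_catl s t : sub (span s) (span (s ++ t)).
Proof. by apply: span_sub (span_subm _) _ => x xs; apply: span_mem; rewrite mem_cat xs. Qed.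

Lemma span_catr s t : sub (span t) (span (s ++ t)).
Proof. by apply: span_sub (span_subm _) _ => x xt; apply: span_mem; rewrite mem_cat xt orbT. Qed.

Lemma span_cat_sub s t M : subm M -> sub (span s) M -> sub (span t) M -> sub (span (s ++ t)) M.
Proof.
move=> hM hs ht; apply: span_sub => // x; rewrite mem_cat => /orP [] xst.
  by apply: hs; apply: span_mem.
by apply: ht; apply: span_mem.
Qed.

Lemma span_Fbar s : nonzero_seq s -> Fbar (span s).
Proof.
move=> /hasP [x xs nx]; case: (span_subm s) => S0 SD SM; split => //.
by exists x; split => //; apply: span_mem.
Qed.

Lemma ringset_Fbar : Fbar (@ringset A).
Proof.
split.
- by exists 0; rewrite emb0.
- by move=> x y [a ->] [b ->]; exists (a + b); rewrite embD.
- by move=> a x [b ->]; exists (a * b); rewrite embM.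
- by exists 1; split; [rewrite oner_eq0 | exists 1; rewrite emb1].
Qed.

Lemma fimg_subm I : is_ideal I -> subm (fimg I).
Proof.
case=> I0 [ID IM]; split.
- by exists 0; rewrite emb0.
- by move=> x y [a [Ia ->]] [b [Ib ->]]; exists (a + b); rewrite embD; split => //; apply: ID.
- by move=> a x [b [Ib ->]]; exists (a * b); rewrite embM; split => //; apply: IM.
Qed.

Lemma smul_Fbar (x : K) E : x != 0 -> Fbar E -> Fbar (smul x E).
Proof.
move=> nx [E0 ED EM [y [ny Ey]]]; split.
- by exists 0; rewrite mulr0.
- by move=> u v [e [Ee ->]] [f [Ef ->]]; exists (e + f); rewrite mulrDr; split => //; apply: ED.
- by move=> a u [e [Ee ->]]; exists (emb a * e); split; [apply: EM | rewrite mulrCA].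
- by exists (x * y); split; [rewrite mulf_neq0 | exists y].
Qed.

Lemma nonzero_allpairs s t : nonzero_seq s -> nonzero_seq t ->
  nonzero_seq [seq x * y | x <- s, y <- t].
Proof.
move=> /hasP [x xs nx] /hasP [y yt ny]; apply/hasP; exists (x * y).
  exact: allpairs_f.
by rewrite mulf_neq0.
Qed.

End Submodules.
Arguments ringset_Fbar {A}.

Section StarOfFiniteType.
Variables (A : idomainType) (star : ({fraction A} -> Prop) -> ({fraction A} -> Prop)).
Hypothesis Hstar : semistar star.
Local Notation K := {fraction A}.
Local Notation sf := (star_f star).
Implicit Types (E F : K -> Prop) (s t : seq K) (I J P : A -> Prop).

Lemma star_Fbar E : Fbar E -> Fbar (star E).
Proof. by case: Hstar => h _ _ _ _; apply: h. Qed.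
Lemma star_mono E F : Fbar E -> Fbar F -> sub E F -> sub (star E) (star F).
Proof. by case: Hstar => _ _ h _ _; apply: h. Qed.
Lemma star_ext E : Fbar E -> sub E (star E).
Proof. by case: Hstar => _ _ _ h _; apply: h. Qed.
Lemma star_idem E : Fbar E -> sub (star (star E)) (star E).
Proof. by case: Hstar => _ _ _ _ h hE x; case: (h E hE x). Qed.
Lemma star_smul x E : x != 0 -> Fbar E -> sub (smul x (star E)) (star (smul x E)).
Proof. by case: Hstar => _ h _ _ _ nx hE z; case: (h x E nx hE z). Qed.

Lemma star_span_mono s t : nonzero_seq s -> nonzero_seq t ->
  sub (span s) (span t) -> sub (star (span s)) (star (span t)).
Proof. by move=> hs ht; apply: star_mono; apply: span_Fbar. Qed.

Lemma star_span_unit s : nonzero_seq s -> star (span s) 1 ->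
  sub (star (@ringset A)) (star (span s)).
Proof.
move=> hs h1; have Fs := star_Fbar (span_Fbar hs).
have sub1 : sub (@ringset A) (star (span s)).
  by move=> x [a ->]; rewrite -[emb a]mulr1; case: Fs => _ _ FM _; apply: FM.
by move=> z /(star_mono ringset_Fbar Fs sub1) /star_idem; apply; apply: span_Fbar.
Qed.

Lemma star_span_mul_unit s t : nonzero_seq s -> nonzero_seq t ->
  star (span s) 1 -> star (span t) 1 -> star (span [seq x * y | x <- s, y <- t]) 1.
Proof.
move=> hs ht h1s h1t; set st := [seq x * y | x <- s, y <- t].
have hst : nonzero_seq st by apply: nonzero_allpairs.
have Fst := star_Fbar (span_Fbar hst); have Ft := span_Fbar ht.
suff s_st : sub (span s) (star (span st)).
  by apply: (star_idem (span_Fbar hst)); apply: (star_mono (span_Fbar hs) Fst s_st).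
apply: span_sub (Fbar_subm Fst) _ => x xs.
have [-> | nx] := eqVneq x 0; first by case: Fst.
have xt_st : sub (smul x (span t)) (span st).
  move=> z [e [te ->]].
  have hM : subm (fun y => span st (x * y)).
    case: (span_subm st) => S0 SD SM; split; first by rewrite mulr0.
      by move=> u v hu hv; rewrite mulrDr; apply: SD.
    by move=> a u hu; rewrite mulrCA; apply: SM.
  by apply: (span_sub hM) te => y yt; apply: span_mem; apply: allpairs_f.
have x_xt : smul x (star (span t)) x by exists 1; rewrite mulr1.
exact: (star_mono (smul_Fbar nx Ft) (span_Fbar hst) xt_st) (star_smul nx Ft x_xt).
Qed.

Lemma sf_mono E F : sub E F -> sub (sf E) (sf F).
Proof. by move=> EF z [s [hs [sE hz]]]; exists s; split => //; split => // x /sE /EF. Qed.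

Lemma sf_ringset I : sub (sf (fimg I)) (star (@ringset A)).
Proof.
move=> z [s [hs [sI hz]]]; apply: (star_mono (span_Fbar hs) ringset_Fbar) hz.
by move=> x /sI [a [_ ->]]; exists a.
Qed.

Lemma sf_unit I : sf (fimg I) 1 -> sub (star (@ringset A)) (sf (fimg I)).
Proof.
by move=> [s [hs [sI h1]]] z hz; exists s; split => //; split => //; apply: star_span_unit.
Qed.

Lemma sf_ext E : Fbar E -> sub E (sf E).
Proof.
move=> hE x Ex; have [-> | nx] := eqVneq x 0.
  case: (hE) => _ _ _ [y [ny Ey]]; have hy : nonzero_seq [:: y] by rewrite /= ny.
  exists [:: y]; split => //; split; last by case: (star_Fbar (span_Fbar hy)).
  by apply: span_sub (Fbar_subm hE) _ => z; rewrite inE => /eqP ->.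
have hx : nonzero_seq [:: x] by rewrite /= nx.
exists [:: x]; split => //; split.
  by apply: span_sub (Fbar_subm hE) _ => z; rewrite inE => /eqP ->.
by apply: star_ext; [exact: span_Fbar | apply: span_mem; rewrite inE].
Qed.

Lemma sf_Fbar E : Fbar E -> Fbar (sf E).
Proof.
move=> hE; have hS := Fbar_subm hE; split.
- by case: (hE) => E0 _ _ _; apply: sf_ext hE _ E0.
- move=> x y [s [hs [sE hx]]] [t [ht [tE hy]]].
  have hst : nonzero_seq (s ++ t) by rewrite has_cat hs.
  exists (s ++ t); split => //; split; first exact: span_cat_sub.
  case: (star_Fbar (span_Fbar hst)) => _ SD _ _; apply: SD.
    exact: star_span_mono hs hst (@span_catl _ s t) _ hx.
  exact: star_span_mono ht hst (@span_catr _ s t) _ hy.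
- move=> a x [s [hs [sE hx]]]; exists s; split => //; split => //.
  by case: (star_Fbar (span_Fbar hs)) => _ _ SM _; apply: SM.
- by case: (hE) => _ _ _ [x [nx Ex]]; exists x; split => //; apply: sf_ext hE _ Ex.
Qed.

Lemma sf_seq_common E s : subm E -> s != [::] -> (forall x, x \in s -> sf E x) ->
  exists t, [/\ nonzero_seq t, sub (span t) E & forall x, x \in s -> star (span t) x].
Proof.
move=> hE; elim: s => [//|x s IH] _ hs.
have [u [hu [uE hxu]]] := hs x (mem_head _ _).
have [-> | ns] := eqVneq s [::].
  by exists u; split => // y; rewrite inE => /eqP ->.
have [t [ht tE hst]] := IH ns (fun y ys => hs y (mem_behead (s := x :: s) ys)).
have hut : nonzero_seq (u ++ t) by rewrite has_cat hu.
exists (u ++ t); split => //; first exact: span_cat_sub.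
move=> y; rewrite inE => /orP [/eqP -> | ys].
  exact: star_span_mono hu hut (@span_catl _ u t) _ hxu.
exact: star_span_mono ht hut (@span_catr _ u t) _ (hst y ys).
Qed.

Lemma sf_idem E : subm E -> sub (sf (sf E)) (sf E).
Proof.
move=> hE z [s [hs [s_sf hz]]].
have ns : s != [::] by move: hs; case: (s).
have [t [ht tE hst]] := sf_seq_common hE ns (fun x xs => s_sf x (span_mem xs)).
have Ft := span_Fbar ht.
exists t; split => //; split => //; apply: (star_idem Ft).
apply: (star_mono (span_Fbar hs) (star_Fbar Ft)) hz.
exact: span_sub (Fbar_subm (star_Fbar Ft)) hst.
Qed.

Definition nzideal I := is_ideal I /\ exists a, a != 0 /\ I a.

Lemma fimg_Fbar I : nzideal I -> Fbar (fimg I).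
Proof.
move=> [hI [a [na Ia]]]; case: (fimg_subm hI) => F0 FD FM; split => //.
by exists (emb a); split; [rewrite emb_eq0 | exists a].
Qed.

Definition qclosure I : A -> Prop := fun a => sf (fimg I) (emb a).

Lemma qclosure_ext I : nzideal I -> forall a, I a -> qclosure I a.
Proof. by move=> hI a Ia; apply: sf_ext (fimg_Fbar hI) _ _; exists a. Qed.

Lemma qclosure_nzideal I : nzideal I -> nzideal (qclosure I).
Proof.
move=> hI; case: (sf_Fbar (fimg_Fbar hI)) => S0 SD SM _; split; last first.
  by case: (hI) => _ [a [na Ia]]; exists a; split => //; apply: qclosure_ext.
split; first by rewrite /qclosure emb0.
split; first by move=> x y hx hy; rewrite /qclosure embD; apply: SD.
by move=> r x hx; rewrite /qclosure embM; apply: SM.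
Qed.

Lemma qclosure_quasi I : nzideal I -> quasi_ideal sf (qclosure I).
Proof.
move=> hI; have [hJ hJnz] := qclosure_nzideal hI; split => //; split => // a.
split; last exact: qclosure_ext (qclosure_nzideal hI) a.
move=> h; apply: (sf_idem (Fbar_subm (fimg_Fbar hI))); move: h; apply: sf_mono.
by move=> x [b [hb ->]].
Qed.

Lemma sf_mul_unit I J P : is_ideal P -> (forall x y, I x -> J y -> P (x * y)) ->
  sf (fimg I) 1 -> sf (fimg J) 1 -> sf (fimg P) 1.
Proof.
move=> hP IJP [s [hs [sI h1s]]] [t [ht [tJ h1t]]].
exists [seq x * y | x <- s, y <- t]; split; first exact: nonzero_allpairs.
split; last exact: star_span_mul_unit.
apply: span_sub (fimg_subm hP) _ => _ /allpairsP [[x y] /= [xs yt ->]].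
have [a [Ia ->]] := sI x (span_mem xs); have [b [Jb ->]] := tJ y (span_mem yt).
by exists (a * b); split; [apply: IJP | rewrite embM].
Qed.

Lemma QMax_adjoin_unit P a : QMax sf P -> ~ P a -> sf (fimg (adjoin P a)) 1.
Proof.
move=> [[hP [Pnz _]] n1 Pmax] nPa.
have hE : nzideal (adjoin P a).
  by split; [exact: adjoin_ideal | case: Pnz => b [nb Pb]; exists b; split => //; apply: adjoin_l].
apply: contrapT => n1E; apply: nPa.
apply/(Pmax _ (qclosure_quasi hE)); last exact: qclosure_ext hE a (adjoin_r a hP).
  by rewrite /qclosure emb1.
by move=> x Px; apply: qclosure_ext hE x (adjoin_l a Px).
Qed.

(* Every element of QMax^{star_f} is prime: if a, b lie outside P but ab in P,
   then 1 lies in ((P + aA)(P + bA))^{star_f}, which is contained in P^{star_f}. *)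
Lemma QMax_prime P : QMax sf P -> prime_ideal P.
Proof.
move=> hQ; have [[hP [_ Pq]] n1 _] := hQ.
split => //; split => // a b Pab; apply: contrapT => /not_orP [nPa nPb].
apply: n1; apply/Pq; rewrite emb1.
exact: sf_mul_unit hP (fun x y => adjoin_mul hP Pab) (QMax_adjoin_unit hQ nPa)
  (QMax_adjoin_unit hQ nPb).
Qed.

Lemma chain_seq (C : set (A -> Prop)) B0 s : total_on C subset -> C B0 ->
  (forall x, x \in s -> fimg (\bigcup_(B in C) B)%classic x) ->
  exists2 B, C B & forall x, x \in s -> fimg B x.
Proof.
move=> Ctot CB0; elim: s => [|x s IH] hs; first by exists B0.
have [B CB sB] := IH (fun y ys => hs y (mem_behead (s := x :: s) ys)).
have [a [[B' CB' B'a] ->]] := hs x (mem_head _ _).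
have [BB' | B'B] := Ctot B B' CB CB'.
- exists B'; first exact: CB'.
  move=> y; rewrite inE => /orP [/eqP -> | ys]; first by exists a.
  by have [b [Bb ->]] := sB y ys; exists b; split; first exact: BB'.
- exists B; first exact: CB.
  move=> y; rewrite inE => /orP [/eqP -> | ys]; last exact: sB.
  by exists a; split; first exact: B'B.
Qed.

(* Ideals above I whose star_f-closure misses 1; the elements of
   QMax^{star_f} above I are the maximal ones among them. *)
Definition sf_avoiding I J := [/\ is_ideal J, forall x, I x -> J x & ~ sf (fimg J) 1].

Lemma chain_sf_avoiding I (C : set (A -> Prop)) B0 x0 :
  total_on C subset -> C B0 -> B0 x0 ->
  (forall B x, C B -> B x -> sf_avoiding I B) ->
  sf_avoiding I (\bigcup_(B in C) B)%classic.
Proof.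
move=> Ctot CB0 B0x0 avC; have [[B00 _] IB0 _] := avC B0 x0 CB0 B0x0.
split; [split; [by exists B0 | split] | by move=> y /IB0; exists B0 | ].
- move=> y z [B CB By] [B' CB' B'z].
  have [BB' | B'B] := Ctot B B' CB CB'.
    have [[_ [BD' _]] _ _] := avC B' z CB' B'z.
    by exists B' => //; apply: BD' => //; apply: BB'.
  have [[_ [BD _]] _ _] := avC B y CB By.
  by exists B => //; apply: BD => //; apply: B'B.
- move=> r y [B CB By]; have [[_ [_ BM]] _ _] := avC B y CB By.
  by exists B => //; apply: BM.
- move=> [s [hs [sU h1]]].
  have [B CB sB] := chain_seq Ctot CB0 (fun y ys => sU y (span_mem ys)).
  have [y ys _] := hasP hs; have [b [Bb _]] := sB y ys.
  have [hB _ n1B] := avC B b CB Bb; apply: n1B; exists s; split => //; split => //.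
  exact: span_sub (fimg_subm hB) sB.
Qed.

Lemma sf_avoiding_max_QMax I M : nzideal I -> sf_avoiding I M ->
  (forall J, sf_avoiding I J -> (forall x, M x -> J x) -> forall x, J x -> M x) ->
  QMax sf M.
Proof.
move=> hI [hM IM n1M] Mmax.
have hMnz : nzideal M.
  by split => //; case: hI => _ [a [na Ia]]; exists a; split => //; apply: IM.
have n1M' : ~ M 1 by move=> M1; apply: n1M; rewrite -emb1; apply: qclosure_ext hMnz 1 M1.
split => //.
- split => //; split; first by case: hMnz.
  move=> a; split; last exact: qclosure_ext hMnz a.
  apply: (Mmax (qclosure M)); last exact: qclosure_ext hMnz.
  split; first by case: (qclosure_nzideal hMnz).
    by move=> x Ix; exact: qclosure_ext hMnz x (IM x Ix).
  move=> h1; apply: n1M; apply: (sf_idem (fimg_subm hM)); move: h1; apply: sf_mono.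
  by move=> _ [b [hb ->]].
- move=> J [hJ [_ Jq]] n1J MJ a; split; last exact: MJ.
  apply: (Mmax J _ MJ a); split => //; first by move=> x /IM /MJ.
  by move=> h1; apply: n1J; apply/Jq; rewrite emb1.
Qed.

Lemma exists_QMax I : nzideal I -> ~ sf (fimg I) 1 ->
  exists P, QMax sf P /\ forall x, I x -> P x.
Proof.
move=> hI n1I; have avI : sf_avoiding I I by split => //; case: hI.
have [|M [ZM Mmax]] := @Zorn_bigcup A (fun J => (exists x, J x) -> sf_avoiding I J).
  move=> C CZ Ctot [x [B0 CB0 B0x]].
  by apply: (chain_sf_avoiding Ctot CB0 B0x) => B y CB By; apply: CZ CB _; exists y.
have avM : sf_avoiding I M.
  apply: ZM; apply: contrapT => /forallNP Mempty; apply: (Mmax I); last by move=> _.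
  split=> [x /Mempty [] | IM]; apply: (Mempty 0); apply: IM.
  by case: hI => [[]].
have [_ IM _] := avM.
exists M; split => //; apply: (sf_avoiding_max_QMax hI avM) => J avJ MJ x Jx.
apply: contrapT => nMx; apply: (Mmax J); last by move=> _.
by split=> // /(_ x Jx).
Qed.

End StarOfFiniteType.

Lemma zero_ideal_prime (R : idomainType) : prime_ideal (fun x : R => x = 0).
Proof.
split; first by split => //; split => [x y -> -> | r x ->]; rewrite ?addr0 ?mulr0.
split; first by move/eqP; rewrite oner_eq0.
by move=> x y /eqP; rewrite mulf_eq0 => /orP [] /eqP; [left | right].
Qed.

Section BracketClosure.
Variables (D : idomainType) (star : ({fraction D} -> Prop) -> ({fraction D} -> Prop)).
Local Notation D1 := {poly D}.
Local Notation K1 := {fraction {poly D}}.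
Local Notation L := {fraction {poly K1}}.
Implicit Types (J : D1 -> Prop) (s t : {poly D1}).

(* (0) lies in Delta1, so elements of S1 are nonzero. *)
Lemma Delta1_zero : Delta1 star (fun p : D1 => p = 0).
Proof.
split; first exact: zero_ideal_prime.
by left => d; split => [/eqP | ->]; rewrite ?polyC_eq0 => // /eqP.
Qed.

Lemma S1_neq0 s : S1 star s -> s != 0.
Proof. by move=> hs; apply/eqP => s0; apply: (hs _ Delta1_zero) => k; rewrite s0 coef0. Qed.

(* 1 lies in S1, since elements of Delta1 are proper. *)
Lemma S1_1 : S1 star 1.
Proof. by move=> Q [[_ [n1 _]] _] /(_ 0%N); rewrite coef1. Qed.

(* S1 is multiplicative since each Q1[Y], Q1 in Delta1, is prime. *)
Lemma S1_mul s t : S1 star s -> S1 star t -> S1 star (s * t).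
Proof.
move=> hs ht Q hQ hst; have [_ [_ Qprime]] := polyext_prime (proj1 hQ).
by case: (Qprime s t hst); [apply: hs | apply: ht].
Qed.

Lemma S1_prod n (F : 'I_n -> {poly D1}) :
  (forall i, S1 star (F i)) -> S1 star (\prod_(i < n) F i).
Proof. by move=> hF; elim/big_ind: _ => //; [exact: S1_1 | exact: S1_mul]. Qed.

(* J^{[star]} ∩ D1, described without fractions: g is brought into J[Y]
   by some element of S1. *)
Definition S1sat J (g : D1) := exists s, S1 star s /\ polyext J (s * g%:P).

Lemma S1sat_ext J g : is_ideal J -> J g -> S1sat J g.
Proof.
by move=> hJ Jg; exists 1; split; [exact: S1_1 | rewrite mul1r; apply/polyextC].
Qed.

Lemma S1sat_ideal J : is_ideal J -> is_ideal (S1sat J).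
Proof.
move=> hJ; have [JY0 [JYD JYM]] := polyext_ideal hJ.
split; first by apply: (S1sat_ext hJ); case: hJ.
split.
  move=> x y [s [hs hx]] [t [ht hy]]; exists (s * t); split; first exact: S1_mul.
  rewrite polyCD mulrDr; apply: JYD; first by rewrite mulrAC; apply: ideal_mulr (polyext_ideal hJ) hx.
  by rewrite -mulrA; apply: JYM.
move=> r x [s [hs hx]]; exists s; split => //.
by rewrite polyCM mulrCA; apply: JYM.
Qed.

Lemma S1sat_idem J g : is_ideal J -> S1sat (S1sat J) g -> S1sat J g.
Proof.
move=> hJ [s [hs hsg]]; have hJY := polyext_ideal hJ; set h := s * g%:P in hsg.
have /fin_all_exists [t ht] :
    forall i : 'I_(size h), exists t, S1 star t /\ polyext J (t * (h`_i)%:P).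
  by move=> i; apply: hsg.
exists ((\prod_(i < size h) t i) * s); split.
  by apply: S1_mul => //; apply: S1_prod => i; case: (ht i).
rewrite -mulrA -/h -[h in _ * h]coefK poly_def mulr_sumr.
apply: ideal_sum => // i; rewrite -mul_polyC mulrA; apply: (ideal_mulr _ hJY).
by rewrite (bigD1 i) //= mulrAC; apply: (ideal_mulr _ hJY); case: (ht i).
Qed.

Lemma embYM x y : embY (x * y) = embY x * embY y :> L.
Proof. by rewrite /embY /emb !rmorphM. Qed.
Lemma embY_sum n (F : 'I_n -> {poly D1}) :
  embY (\sum_(i < n) F i) = \sum_(i < n) embY (F i) :> L.
Proof. by rewrite /embY /emb !rmorph_sum. Qed.
Lemma embY_prod n (F : 'I_n -> {poly D1}) (P : pred 'I_n) :
  embY (\prod_(i < n | P i) F i) = \prod_(i < n | P i) embY (F i) :> L.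
Proof. by rewrite /embY /emb !rmorph_prod. Qed.
Lemma embYC q : embY q%:P = embK1 (emb q) :> L.
Proof. by rewrite /embY /embK1 /emb map_polyC. Qed.
Lemma embY_inj : injective (@embY D).
Proof.
move=> x y /eqP; rewrite /embY tofrac_eq => /eqP.
by apply: map_inj_poly; [move=> u v /eqP; rewrite /emb tofrac_eq => /eqP | rewrite /emb rmorph0].
Qed.
Lemma embY_neq0 x : x != 0 -> embY x != 0 :> L.
Proof.
apply: contraNneq => x0; apply/eqP/embY_inj.
by rewrite x0 /embY /emb !rmorph0.
Qed.

Lemma bracket_fimgE J g : is_ideal J -> bracket star (fimg J) (emb g) <-> S1sat J g.
Proof.
move=> hJ; split.
- move=> [n [f [s [e [hs [he eq_g]]]]]].
  have /fin_all_exists [q hq] : forall i, exists q, J q /\ e i = emb q.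
    by move=> i; have [a [Ja ->]] := he i; exists a.
  exists (\prod_(i < n) s i); split; first exact: S1_prod.
  have -> : (\prod_(i < n) s i) * g%:P =
      \sum_(i < n) f i * (\prod_(j < n | j != i) s j) * (q i)%:P.
    apply: embY_inj; rewrite embYM embY_sum embYC eq_g mulr_sumr; apply: eq_bigr => i _.
    rewrite !embYM embYC -(proj2 (hq i)) embY_prod embY_prod (bigD1 i) //=.
    have nz : embY (s i) != 0 :> L by apply: embY_neq0; apply: S1_neq0.
    set b := \prod_(j < n | j != i) _.
    by rewrite [_ / embY (s i)]mulrC -!mulrA [b * _]mulrCA mulVKf // mulrCA mulrA.
  apply: ideal_sum (polyext_ideal hJ) _ => i; rewrite mulrC.
  by apply: ideal_mulr (polyext_ideal hJ) _; apply/polyextC => //; case: (hq i).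
- move=> [s [hs hsg]]; set h := s * g%:P in hsg.
  exists (size h), (fun i => 'X^i), (fun _ => s), (fun i => emb h`_i).
  split => //; split; first by move=> i; exists h`_i.
  have nz : embY s != 0 :> L by apply: embY_neq0; apply: S1_neq0.
  rewrite -embYC; apply: (mulfI nz); rewrite -embYM -/h mulr_sumr.
  rewrite -[h in LHS]coefK poly_def embY_sum; apply: eq_bigr => i _.
  by rewrite -mul_polyC embYM embYC [_ / embY s]mulrC -mulrA mulVKf // mulrC.
Qed.

Lemma quasi_bracketE J : quasi_ideal (bracket star) J <->
  [/\ is_ideal J, (exists a, a != 0 /\ J a) & forall a, S1sat J a <-> J a].
Proof.
split=> [[hJ [Jnz Jq]] | [hJ Jnz Jq]]; first by split => // a; rewrite -bracket_fimgE.
by split => //; split => // a; rewrite bracket_fimgE.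
Qed.

Lemma Delta1_quasi Q : Delta1 star Q -> (exists a, a != 0 /\ Q a) ->
  quasi_ideal (bracket star) Q.
Proof.
move=> hD Qnz; have [hQ _] := proj1 hD; apply/quasi_bracketE; split => // a.
split; last exact: S1sat_ext.
move=> [s [hs hsa]]; have [_ [_ QYprime]] := polyext_prime (proj1 hD).
by case: (QYprime _ _ hsa) => [/(hs Q hD) [] | /(polyextC _ hQ)].
Qed.

Lemma S1sat_quasi J : is_ideal J -> (exists a, a != 0 /\ J a) ->
  quasi_ideal (bracket star) (S1sat J).
Proof.
move=> hJ [a [na Ja]]; apply/quasi_bracketE; split; first exact: S1sat_ideal.
  by exists a; split => //; apply: S1sat_ext.
by move=> b; split; [exact: S1sat_idem | apply: S1sat_ext; exact: S1sat_ideal].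
Qed.

End BracketClosure.

Section Content.
Variable D : idomainType.
Local Notation D1 := {poly D}.
Implicit Types (Q J : D1 -> Prop) (P : D -> Prop).

Lemma contr_ideal Q : is_ideal Q -> is_ideal (contr Q).
Proof.
case=> Q0 [QD QM]; split; first by rewrite /contr polyC0.
by split=> [x y hx hy | r x hx]; rewrite /contr ?polyCD ?polyCM; [apply: QD | apply: QM].
Qed.

Lemma content_ideal_ideal Q : is_ideal (content_ideal Q).
Proof.
split.
  by exists 0%N, (fun _ => 0), (fun _ => 0), (fun _ => 0%N); rewrite big_ord0; split => // [[]].
split.
  move=> x y [n [c [q [k [hq ->]]]]] [m [c' [q' [k' [hq' ->]]]]].
  pose pick T (u : 'I_n -> T) (v : 'I_m -> T) i :=
    match split i with inl a => u a | inr b => v b end.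
  exists (n + m)%N, (pick _ c c'), (pick _ q q'), (pick _ k k').
  split; first by move=> i; rewrite /pick; case: split.
  rewrite big_split_ord /=; congr (_ + _); apply: eq_bigr => i _.
    by rewrite /pick (unsplitK (inl _ i)).
  by rewrite /pick (unsplitK (inr _ i)).
move=> r x [n [c [q [k [hq ->]]]]]; exists n, (fun i => r * c i), q, k; split => //.
by rewrite mulr_sumr; apply: eq_bigr => i _; rewrite mulrA.
Qed.

Lemma content_of Q q k : Q q -> content_ideal Q q`_k.
Proof.
move=> Qq; exists 1%N, (fun _ => 1), (fun _ => q), (fun _ => k); split => //.
by rewrite big_ord1 mul1r.
Qed.

Lemma content_mono Q J : (forall q, Q q -> J q) -> forall a, content_ideal Q a -> content_ideal J a.
Proof. by move=> QJ a [n [c [q [k [hq ->]]]]]; exists n, c, q, k; split => // i; apply: QJ. Qed.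

Lemma content_sub Q P : is_ideal P -> (forall q, Q q -> extX P q) ->
  forall a, content_ideal Q a -> P a.
Proof.
move=> hP QP a [n [c [q [k [hq ->]]]]]; apply: ideal_sum => // i.
by case: hP => _ [_ PM]; apply: PM; apply: QP.
Qed.

Lemma content_seq J (s : seq {fraction D}) :
  (forall x, x \in s -> fimg (content_ideal J) x) ->
  exists qs : seq D1, (forall q, q \in qs -> J q) /\
    forall x, x \in s -> fimg (content_ideal (fun q => q \in qs)) x.
Proof.
elim: s => [|x s IH] hs; first by exists [::].
have [qs [qsJ sqs]] := IH (fun y ys => hs y (mem_behead (s := x :: s) ys)).
have [a [[n [c [q [k [hq ->]]]]] ->]] := hs x (mem_head _ _).
exists (qs ++ [seq q i | i <- enum 'I_n]); split.
  by move=> p; rewrite mem_cat => /orP [/qsJ // | /mapP [i _ ->]].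
move=> y; rewrite inE => /orP [/eqP -> | ys].
  exists (\sum_(i < n) c i * (q i)`_(k i)); split => //.
  by exists n, c, q, k; split => // i; rewrite mem_cat map_f ?orbT ?mem_enum.
have [b [hb ->]] := sqs y ys; exists b; split => //.
by apply: content_mono hb => p pqs; rewrite mem_cat pqs.
Qed.

End Content.

Section S1Membership.
Variables (D : idomainType) (star : ({fraction D} -> Prop) -> ({fraction D} -> Prop)).
Hypothesis Hstar : semistar star.
Local Notation sf := (star_f star).
Implicit Types (J : {poly D} -> Prop) (qs : seq {poly D}).

(* The polynomial d + q_1 Y + ... + q_n Y^n lies in S1 when d != 0 and the
   content of the q_i has 1 in its star_f: it escapes every upper to zero
   through d, and every P[X] in Delta1 through the q_i. *)
Lemma S1_Poly (d : D) qs : d != 0 ->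
  sf (fimg (content_ideal (fun q => q \in qs))) 1 -> S1 star (Poly (d%:P :: qs)).
Proof.
move=> nd h1 Q [[hQ _] [Q0 | [Qext [_ [x [hx nx]]]]]] hS.
  by move: (hS 0%N); rewrite coef_Poly => /(proj1 (Q0 d)) d0; rewrite d0 eqxx in nd.
apply: nx; apply: (sf_unit Hstar _ hx); move: h1; apply: sf_mono => _ [a [ha ->]].
exists a; split => //; apply: content_sub (contr_ideal hQ) _ a ha => q qqs.
by apply/Qext; have := hS (index q qs).+1; rewrite coef_Poly /= nth_index.
Qed.

Lemma S1sat_one J d : is_ideal J -> J d%:P -> d != 0 ->
  sf (fimg (content_ideal J)) 1 -> S1sat star J 1.
Proof.
move=> hJ Jd nd [s [hs [sc h1]]].
have [qs [qsJ sqs]] := content_seq (fun x xs => sc x (span_mem xs)).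
exists (Poly (d%:P :: qs)); split.
  apply: S1_Poly nd _; exists s; split => //; split => //.
  exact: span_sub (fimg_subm (content_ideal_ideal _)) sqs.
rewrite mulr1 => -[|k]; rewrite coef_Poly //=.
have [lt_k | ge_k] := ltnP k (size qs); first by apply: qsJ; apply: mem_nth.
by rewrite nth_default //; case: hJ.
Qed.

Lemma quasi_bracket_unit J d : quasi_ideal (bracket star) J -> J d%:P -> d != 0 ->
  sf (fimg (content_ideal J)) 1 -> J 1.
Proof.
by move=> /quasi_bracketE [hJ _ Jq] Jd nd h1; apply/Jq; apply: S1sat_one Jd nd h1.
Qed.

End S1Membership.

(* An ideal strictly containing a nonzero upper to zero Q of D[X] contains a
   nonzero constant: otherwise a resultant argument produces a nonzero
   element of Q of smaller degree. *)
Lemma upper_to_zero_meets (D : idomainType) (Q J : {poly D} -> Prop) j q :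
  prime_ideal Q -> (forall d, Q d%:P -> d = 0) -> is_ideal J ->
  (forall p, Q p -> J p) -> J j -> ~ Q j -> Q q -> q != 0 -> exists2 d, d != 0 & J d%:P.
Proof.
move=> [hQ [_ Qprime]] Q0 hJ QJ Jj nQj.
have [j0 | nj] := eqVneq j 0; first by rewrite j0 in nQj; case: nQj; case: hQ.
have [le_j1 | gt_j1] := leqP (size j) 1.
  exists j`_0; last by rewrite -(size1_polyC le_j1).
  by apply: contraNneq nj => j00; rewrite (size1_polyC le_j1) j00.
have [n] := ubnP (size q); elim: n => // n IH in q *; rewrite ltnS => le_qn Qq nq.
have gt_q1 : (1 < size q)%N.
  rewrite ltnNge; apply/negP => /size1_polyC qE.
  by move: nq Qq; rewrite qE polyC_eq0 => nq0 /Q0 q00; rewrite q00 eqxx in nq0.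
(* The resultant of q and j is a constant of J; if it is nonzero we are done. *)
have [[u v] /= _ res_uv] := resultant_in_ideal gt_q1 gt_j1.
have [res0 | resn0] := eqVneq (resultant q j) 0; last first.
  exists (resultant q j) => //; rewrite res_uv; case: (hJ) => _ [JD JM].
  by apply: JD; apply: JM; [apply: QJ | ].
(* Otherwise q and j share a factor g of positive degree: c q = w g, c' j = w' g. *)
have gt_g1 : (1 < size (gcdp q j))%N by rewrite -resultant_eq0 res0.
have g0 : gcdp q j != 0 by rewrite -size_poly_eq0 -lt0n ltnW.
have /Pdiv.Idomain.dvdpP [[c w] /= c0 qE] := dvdp_gcdl q j.
have /Pdiv.Idomain.dvdpP [[c' w'] /= c'0 jE] := dvdp_gcdr q j.
have QM r p : Q p -> Q (r * p) by case: hQ => _ [_ QM]; apply: QM.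
have Qwg : Q (w * gcdp q j) by rewrite -qE -mul_polyC; apply: QM.
(* If w lies in Q, it is a nonzero element of smaller degree than q. *)
have [Qw | Qg] := Qprime _ _ Qwg.
  have w0 : w != 0.
    apply: contraNneq nq => w0; move: qE; rewrite w0 mul0r => /eqP.
    by rewrite scale_poly_eq0 (negPf c0).
  apply: (IH w _ Qw w0); apply: leq_trans le_qn.
  by have := size_scale q c0; rewrite qE size_mul // => <-; lia.
(* If g lies in Q, so does c' j, hence j. *)
case: (Qprime c'%:P j) => [| /Q0 c'e | //]; last by rewrite c'e eqxx in c'0.
by rewrite mul_polyC jE; apply: QM.
Qed.

Section QMaxBracket.
Variables (D : idomainType) (star : ({fraction D} -> Prop) -> ({fraction D} -> Prop)).
Hypothesis Hstar : semistar star.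
Local Notation sf := (star_f star).
Implicit Types (Q J : {poly D} -> Prop) (P : D -> Prop).

Lemma extX_Delta1 P : QMax sf P -> Delta1 star (extX P).
Proof.
move=> hPmax; have [[hP [_ Pq]] n1 _] := hPmax.
split; first exact: polyext_prime (QMax_prime Hstar hPmax).
right; split; [ | split].
- by move=> p; split=> Pp k; [apply/(polyextC _ hP); apply: Pp | apply/(polyextC _ hP); apply: Pp].
- exact: sf_ringset.
- exists 1; split; first by apply: (star_ext Hstar ringset_Fbar); exists 1; rewrite emb1.
  move=> h1; apply: n1; apply/Pq; rewrite emb1; move: h1; apply: sf_mono => _ [b [Pb ->]].
  by exists b; split => //; apply/(polyextC _ hP).
Qed.

Lemma extX_quasi P : QMax sf P -> quasi_ideal (bracket star) (extX P) /\ ~ extX P 1.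
Proof.
move=> hPmax; have [[hP [[a [na Pa]] _]] _ _] := hPmax.
split; last by move/(_ 0%N); rewrite coef1; case: hPmax.
apply: Delta1_quasi (extX_Delta1 hPmax) _.
by exists a%:P; split; [rewrite polyC_eq0 | apply/(polyextC _ hP)].
Qed.

(* Every element of QMax^{[star]} is prime: if a, b lie outside Q but ab in Q,
   the S1-saturations of Q + aD1 and Q + bD1 contain 1, and so does that of Q. *)
Lemma QMax_bracket_prime Q : QMax (bracket star) Q -> prime_ideal Q.
Proof.
move=> [hq n1 Qmax]; have /quasi_bracketE [hQ [q [nq Qq]] Qsat] := hq.
have adjoin_unit a : ~ Q a -> S1sat star (adjoin Q a) 1.
  move=> nQa; have hE := adjoin_ideal a hQ.
  have Enz : exists b, b != 0 /\ adjoin Q a b by exists q; split => //; apply: adjoin_l.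
  have QE x : Q x -> S1sat star (adjoin Q a) x by move=> Qx; apply: S1sat_ext hE (adjoin_l a Qx).
  apply: contrapT => n1E; apply: nQa; apply/(Qmax _ (S1sat_quasi star hE Enz) n1E QE).
  exact: S1sat_ext hE (adjoin_r a hQ).
split => //; split => // a b Qab; apply: contrapT => /not_orP [nQa nQb].
have [sa [hsa]] := adjoin_unit a nQa; rewrite mulr1 => Ea.
have [sb [hsb]] := adjoin_unit b nQb; rewrite mulr1 => Eb.
apply: n1; apply/Qsat; exists (sa * sb); split; first exact: S1_mul.
rewrite mulr1; exact: polyext_mul hQ (fun x y => adjoin_mul hQ Qab) Ea Eb.
Qed.

Lemma QMax_bracket_extX Q : QMax (bracket star) Q -> ~ sf (fimg (content_ideal Q)) 1 ->
  exists P, QMax sf P /\ forall p, Q p <-> extX P p.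
Proof.
move=> [hq _ Qmax] n1c; have /quasi_bracketE [hQ [q [nq Qq]] _] := hq.
have cnz : nzideal (content_ideal Q).
  split; first exact: content_ideal_ideal.
  by exists (lead_coef q); split; [rewrite lead_coef_eq0 | apply: content_of].
have [P [hPmax cP]] := exists_QMax Hstar cnz n1c.
have [qP n1P] := extX_quasi hPmax.
have QP p : Q p -> extX P p by move=> Qp k; apply: cP; apply: content_of.
by exists P; split => // p; split; [exact: QP | exact: (proj1 (Qmax _ qP n1P QP p))].
Qed.

(* Inclusion "⊆" of the theorem: a QMax^{[star]} ideal meeting D in (0) has
   full content (else it would be some P[X], which meets D); otherwise it
   contains a nonzero constant, so 1 lies outside the star_f of its content
   ([quasi_bracket_unit]) and it is some P[X]. *)
Lemma QMax_bracket_classify Q : QMax (bracket star) Q ->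
  (prime_ideal Q /\ (forall d : D, contr Q d <-> d = 0) /\
    seteq (sf (fimg (content_ideal Q))) (star (@ringset D)))
  \/ exists P, QMax sf P /\ forall p, Q p <-> extX P p.
Proof.
move=> hQmax; have Qprime := QMax_bracket_prime hQmax.
have [hq n1 _] := hQmax; have hQ := proj1 Qprime.
have [Q0 | /existsNP [d nd]] := pselect (forall d : D, contr Q d <-> d = 0).
  left; split => //; split => // x; split; first exact: sf_ringset.
  move=> hx; apply: contrapT => nx.
  have n1c : ~ sf (fimg (content_ideal Q)) 1 by move=> /(sf_unit Hstar) /(_ x hx).
  have [P [[[hP [[a [na Pa]] _]] _ _] QP]] := QMax_bracket_extX hQmax n1c.
  have /(proj1 (Q0 a)) a0 : contr Q a by apply/QP/(polyextC _ hP).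
  by rewrite a0 eqxx in na.
right; apply: QMax_bracket_extX => // h1.
have nd0 : d != 0.
  by apply/eqP => d0; apply: nd; rewrite d0 /contr polyC0; split => // _; case: hQ.
have Qd : Q d%:P by apply: contrapT => nQd; apply: nd; split => // /eqP; rewrite (negPf nd0).
exact: n1 (quasi_bracket_unit Hstar hq Qd nd0 h1).
Qed.

Lemma upper_to_zero_QMax Q : prime_ideal Q -> (forall d : D, contr Q d <-> d = 0) ->
  seteq (sf (fimg (content_ideal Q))) (star (@ringset D)) -> QMax (bracket star) Q.
Proof.
move=> Qprime Q0 c_full; have hQ := proj1 Qprime.
have c1 : sf (fimg (content_ideal Q)) 1.
  by apply/c_full; apply: (star_ext Hstar ringset_Fbar); exists 1; rewrite emb1.
(* Q is nonzero, since 1 lies in the star_f of its content. *)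
have [q nq Qq] : exists2 q, q != 0 & Q q.
  apply: contrapT => noq; case: c1 => s [/hasP [x xs nx] [sc _]].
  have [a [ca ex]] := sc x (span_mem xs).
  suff a0 : a = 0 by rewrite ex a0 emb0 eqxx in nx.
  apply: (@content_sub D Q (fun x => x = 0) (proj1 (zero_ideal_prime D)) _ a ca) => p Qp k.
  suff -> : p = 0 by rewrite coef0.
  by apply: contrapT => np; apply: noq; exists p => //; apply/eqP.
have hq := Delta1_quasi (conj Qprime (or_introl Q0)) (ex_intro _ q (conj nq Qq)).
split => //; first by case: Qprime => _ [].
(* A proper quasi-[star]-ideal J strictly above Q contains a nonzero constant
   and has content of full star_f, which is impossible. *)
move=> J qJ n1J QJ p; split; last exact: QJ.
move=> Jp; apply: contrapT => nQp; apply: n1J; have /quasi_bracketE [hJ _ _] := qJ.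
have [d nd Jd] := upper_to_zero_meets Qprime (fun d => proj1 (Q0 d)) hJ QJ Jp nQp Qq nq.
apply: (quasi_bracket_unit Hstar qJ Jd nd).
by move: c1; apply: sf_mono => _ [a [ca ->]]; exists a; split => //; apply: content_mono QJ a ca.
Qed.

Lemma extX_QMax P : QMax sf P -> QMax (bracket star) (extX P).
Proof.
move=> hPmax; have [qP n1P] := extX_quasi hPmax.
have [[hP [[b [nb Pb]] _]] _ _] := hPmax.
(* If J strictly above P[X] contains p with p_k outside P, then
   1 lies in (P + p_k D)^{star_f}, whose elements r + u p_k are
   coefficients of elements of J; so J contains 1. *)
split => // J qJ n1J PJ p; split; last exact: PJ.
move=> Jp; apply: contrapT => /existsNP [k nk]; apply: n1J.
have /quasi_bracketE [hJ _ _] := qJ; have [_ [JD JM]] := hJ.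
have Jc c : P c -> J c%:P by move=> Pc; apply: PJ; apply/(polyextC _ hP).
apply: (quasi_bracket_unit Hstar qJ (Jc b Pb) nb).
move: (QMax_adjoin_unit Hstar hPmax nk); apply: sf_mono => _ [a [[r [u [Pr ->]]] ->]].
exists (r + u * p`_k); split => //.
have -> : r + u * p`_k = ('X^k * r%:P + u%:P * p)`_k.
  by rewrite coefD coefXnM ltnn subnn coefC eqxx coefCM.
by apply: content_of; apply: JD; apply: JM; [apply: Jc | exact: Jp].
Qed.

End QMaxBracket.

Theorem theorem2p3 (D : idomainType)
    (star : ({fraction D} -> Prop) -> ({fraction D} -> Prop))
    (Hstar : semistar star) (Q1 : {poly D} -> Prop) :
  QMax (bracket star) Q1 <->
  ((prime_ideal Q1 /\ (forall d : D, contr Q1 d <-> d = 0) /\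
    seteq (star_f star (fimg (content_ideal Q1))) (star (@ringset D)))
   \/ exists P : D -> Prop, QMax (star_f star) P /\ (forall p, Q1 p <-> extX P p)).
Proof.
split; first exact: QMax_bracket_classify.
case=> [[Q1prime [Q0 c_full]] | [P [hPmax Q1P]]]; first exact: upper_to_zero_QMax.
have -> : Q1 = extX P by apply: funext => p; apply: propext.
exact: extX_QMax.
Qed.
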